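(* Let $G^\sigma$ be an oriented graph whose underlying graph $G$ is a simple connected graph with $n$ vertices and $m$ edges. Then $$sr(G^\sigma)-\alpha(G)\geqslant 4n-2m-3\sqrt{n(n-1)-2m+\tfrac{1}{4}}-\tfrac{7}{2},$$ with equality if and only if $G\cong S_n$ or $G\cong C_3$.
   Context: An oriented graph $G^\sigma$ is obtained from a simple graph $G$ by assigning a direction to each edge. Its skew-adjacency matrix $S(G^\sigma)=[s_{x,y}]$ has $s_{x,y}=1$ if there is an arc from $x$ to $y$, $s_{x,y}=-1$ if there is an arc from $y$ to $x$, and $0$ otherwise; the skew-rank $sr(G^\sigma)$ is the rank of $S(G^\sigma)$. $\alpha(G)$ is the independence number of $G$. $S_n$ denotes the star on $n$ vertices (the single vertex when $n=1$) and $C_3$ the triangle. *)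

From mathcomp Require Import all_boot all_order all_algebra.
Set Implicit Arguments. Unset Strict Implicit. Unset Printing Implicit Defensive.
Import Order.TTheory GRing.Theory Num.Theory.

Definition simple_graph (V : finType) (e : rel V) : Prop :=
  irreflexive e /\ symmetric e.

Definition connected_graph (V : finType) (e : rel V) : Prop :=
  forall x y : V, connect e x y.

Definition edges (V : finType) (e : rel V) : {set {set V}} :=
  [set A : {set V} | [exists x, exists y, e x y && (A == [set x; y])]].

Definition nedges (V : finType) (e : rel V) : nat := #|edges e|.

Definition independent (V : finType) (e : rel V) (S : {set V}) : bool :=
  [forall x in S, forall y in S, ~~ e x y].

Definition alpha (V : finType) (e : rel V) : nat :=
  \max_(S : {set V} | independent e S) #|S|.

Definition orientation_of (V : finType) (e o : rel V) : Prop :=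
  forall x y : V, e x y = (o x y || o y x) /\ ~~ (o x y && o y x).

Definition skew_adj (R : pzRingType) (V : finType) (o : rel V) : 'M[R]_#|V| :=
  (\matrix_(i, j) (if o (enum_val i) (enum_val j) then 1
                  else if o (enum_val j) (enum_val i) then -1 else 0))%R.

Definition skew_rank (R : fieldType) (V : finType) (o : rel V) : nat :=
  \rank (skew_adj R o).

Definition graph_iso (V W : finType) (e : rel V) (f : rel W) : Prop :=
  exists phi : V -> W, bijective phi /\ forall x y, f (phi x) (phi y) = e x y.

(* The star S_k on vertex set 'I_k with center 0 (S_1 is a single vertex). *)
Definition star_rel (k : nat) : rel 'I_k :=
  fun i j => (i != j) && ((val i == 0%N) || (val j == 0%N)).

Definition C3_rel : rel 'I_3 := fun i j => i != j.

(* Write s for the square root in the bound.  Counting the non-edges inside a maximum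
   independent set gives alpha (alpha - 1) + 2 m <= n (n - 1), i.e. alpha - 1/2 <= s, and
   connectivity (m >= n - 1) gives s <= n - 3/2.  Eliminating m,
     sr - alpha - rhs = (sr - 2) + (s - (alpha - 1/2)) + (n - 3/2 - s) (n + s - 7/2),
   and for n >= 2 every term is nonnegative, since an edge yields a 2 x 2 minor
   [[0, 1], [-1, 0]] of the skew-adjacency matrix.  Equality makes the last product vanish,
   forcing either alpha = n - 1 (a star) or n = m = 3 (the triangle); conversely, a skew
   matrix supported on one row and one column, or of odd order 3, has rank at most 2.
   For n = 1 both sides equal -1. *)

From mathcomp Require Import all_boot all_order all_algebra.
From mathcomp Require Import perm zify ring lra.
Set Implicit Arguments. Unset Strict Implicit. Unset Printing Implicit Defensive.
Import Order.TTheory GRing.Theory Num.Theory.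

Section Reachable.
Variables (V : finType) (e : rel V) (r : V).
Hypothesis reach : forall v, connect e r v.

Definition has_walk v k := [exists p : k.-tuple V, path e r p && (last r p == v)].

Lemma has_walk_ex v : exists k, has_walk v k.
Proof.
have /connectP[p p_path ->] := reach v.
by exists (size p); apply/existsP; exists (in_tuple p); rewrite p_path eqxx.
Qed.

Definition dist v := ex_minn (has_walk_ex v).

Lemma dist_parent_ex v : v != r -> exists u, e u v && (dist u < dist v).
Proof.
move=> vr; rewrite /dist; case: ex_minnP => k /existsP[p /andP[]] + + _.
have := size_tuple p; case/lastP: (tval p) => [|q x].
  by move=> _ _ /eqP rv; rewrite -rv eqxx in vr.
rewrite rcons_path last_rcons size_rcons => <- /andP[q_path qx] /eqP <-.
exists (last r q); rewrite qx /=.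
case: ex_minnP => k' _; apply; apply/existsP; exists (in_tuple q).
by rewrite q_path eqxx.
Qed.

Definition parent v := odflt v [pick u | e u v && (dist u < dist v)].

Lemma parentP v : v != r -> e (parent v) v && (dist (parent v) < dist v).
Proof.
move=> vr; rewrite /parent; case: pickP => [u //|none].
by have [u] := dist_parent_ex vr; rewrite none.
Qed.

Lemma card_pred_le_nedges : (#|V|.-1 <= nedges e)%N.
Proof.
rewrite -(cardsC1 r) /nedges.
pose edge_to_parent v := [set parent v; v].
have inj : {in [set~ r] &, injective edge_to_parent}.
  move=> v w; rewrite !inE => vr wr Evw; apply/eqP; apply: contraT => vw.
  have /andP[_ lt_v] := parentP vr; have /andP[_ lt_w] := parentP wr.
  have : v \in edge_to_parent w by rewrite -Evw set22.
  have : w \in edge_to_parent v by rewrite Evw set22.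
  rewrite !inE [w == v]eq_sym (negbTE vw) !orbF => /eqP wp /eqP vp.
  suff : dist w < dist w by rewrite ltnn.
  by rewrite {1}wp (ltn_trans lt_v) // {1}vp.
rewrite -(card_in_imset inj); apply/subset_leq_card/subsetP => A /imsetP[v].
rewrite !inE => vr ->; apply/existsP; exists (parent v); apply/existsP; exists v.
by have /andP[-> _] := parentP vr; rewrite eqxx.
Qed.

End Reachable.

Section Independence.
Variables (V : finType) (e : rel V).

Lemma edgesP A : reflect (exists x y, e x y /\ A = [set x; y]) (A \in edges e).
Proof.
rewrite inE; apply: (iffP existsP) => [[x /existsP[y /andP[exy /eqP->]]]|[x [y [exy ->]]]].
  by exists x, y.
by exists x; apply/existsP; exists y; rewrite exy eqxx.
Qed.

Lemma independentP S x y : independent e S -> x \in S -> y \in S -> ~~ e x y.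
Proof. by move=> /forall_inP S_ind xS yS; apply: (forall_inP (S_ind x xS)). Qed.

Lemma independent1 x : irreflexive e -> independent e [set x].
Proof.
move=> e_irr; apply/forall_inP => _ /set1P->.
by apply/forall_inP => _ /set1P->; rewrite e_irr.
Qed.

Lemma alpha_max S : independent e S -> (#|S| <= alpha e)%N.
Proof. exact: (@leq_bigmax_cond _ _ (fun S : {set V} => #|S|) S). Qed.

Lemma alpha_witness : exists2 S, independent e S & #|S| = alpha e.
Proof.
have : (0 < #|independent e|)%N.
  by apply/card_gt0P; exists set0; apply/forall_inP => x; rewrite inE.
move/(eq_bigmax_cond (fun S : {set V} => #|S|)) => [S S_ind max_S].
by exists S; rewrite // /alpha max_S.
Qed.

Lemma nedges_indep_le S : irreflexive e -> independent e S ->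
  (nedges e + 'C(#|S|, 2) <= 'C(#|V|, 2))%N.
Proof.
move=> e_irr S_ind.
pose pairs_in (B : {set V}) := [set A : {set V} | A \subset B & #|A| == 2].
have edges_pairs : edges e \subset pairs_in [set: V].
  apply/subsetP => _ /edgesP[x [y [exy ->]]].
  have xy : x != y by apply: contraTneq exy => ->; rewrite e_irr.
  by rewrite inE subsetT cards2 xy.
have edges_S : edges e :&: pairs_in S = set0.
  apply/setP => A; rewrite in_setI in_set0.
  apply/negbTE/andP => -[/edgesP[x [y [exy ->]]]].
  rewrite inE subUset !sub1set => /andP[/andP[xS yS] _].
  by have := independentP S_ind xS yS; rewrite exy.
rewrite /nedges -(cardsT V) -!cards_draws -cardsUI edges_S cards0 addn0.
apply/subset_leq_card; rewrite subUset edges_pairs /=.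
by apply/subsetP => A; rewrite !inE subsetT => /andP[_ ->].
Qed.
End Independence.

Definition star_at (V : finType) (c : V) : rel V :=
  [rel x y | (x != y) && ((x == c) || (y == c))].

Section ExtremalGraphs.
Variables (V : finType) (e : rel V).

Lemma graph_iso_starP : (0 < #|V|)%N ->
  graph_iso e (@star_rel #|V|) <-> exists c, e =2 star_at c.
Proof.
move=> V_gt0; pose z0 : 'I_#|V| := Ordinal V_gt0.
have val_eq0 (i : 'I_#|V|) : (val i == 0%N) = (i == z0) by [].
split=> [[phi [[psi phiK psiK] e_phi]]|[c e_c]].
  exists (psi z0) => x y; rewrite -e_phi /star_rel !val_eq0.
  by rewrite (inj_eq (can_inj phiK)) -!(inj_eq (can_inj psiK)) !phiK.
pose phi x := tperm (enum_rank c) z0 (enum_rank x).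
have phi_inj : injective phi by move=> x y /perm_inj/enum_rank_inj.
exists phi; split.
  exists (fun i => enum_val (tperm (enum_rank c) z0 i)) => [x|i].
    by rewrite tpermK enum_rankK.
  by rewrite /phi enum_valK tpermK.
move=> x y; rewrite e_c /star_rel (inj_eq phi_inj) !val_eq0.
by rewrite -[z0](tpermL (enum_rank c)) !(inj_eq perm_inj) !(inj_eq enum_rank_inj).
Qed.

Lemma graph_iso_C3P : graph_iso e C3_rel <-> #|V| = 3%N /\ forall x y, e x y = (x != y).
Proof.
split=> [[phi [phi_bij e_phi]]|[V3 e_compl]].
  split; first by rewrite (bij_eq_card phi_bij) card_ord.
  by move=> x y; rewrite -e_phi /C3_rel (inj_eq (bij_inj phi_bij)).
pose phi x := cast_ord V3 (enum_rank x).
have phi_bij : bijective phi.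
  exists (fun i => enum_val (cast_ord (esym V3) i)) => [x|i].
    by rewrite cast_ordK enum_rankK.
  by rewrite /phi enum_valK cast_ordKV.
by exists phi; split=> // x y; rewrite /C3_rel (inj_eq (bij_inj phi_bij)) e_compl.
Qed.

Lemma neighbor_ex x y : x != y -> connect e x y -> exists z, e x z.
Proof.
move=> xy /connectP[[|z p] /=]; first by move=> _ yx; rewrite yx eqxx in xy.
by case/andP=> exz _ _; exists z.
Qed.

Lemma indep_setC1_star c : e =2 star_at c -> independent e [set~ c].
Proof.
move=> e_c; apply/forall_inP => x; rewrite !inE => xc.
apply/forall_inP => y; rewrite !inE e_c /star_at /= (negbTE xc).
by move=> /negbTE->; rewrite andbF.
Qed.

Hypotheses (e_irr : irreflexive e) (e_sym : symmetric e).

Lemma star_of_indep_setC1 c : connected_graph e ->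
  independent e [set~ c] -> e =2 star_at c.
Proof.
move=> e_conn c_ind.
have in_setC1 x : x != c -> x \in [set~ c] by rewrite !inE.
have adj_c x : x != c -> e x c.
  move=> xc; have [z exz] := neighbor_ex xc (e_conn x c).
  have [<- //|zc] := eqVneq z c.
  by have := independentP c_ind (in_setC1 x xc) (in_setC1 z zc); rewrite exz.
move=> x y; rewrite /star_at /=.
have [->|xc] := eqVneq x c; have [->|yc] := eqVneq y c.
- by rewrite e_irr.
- by rewrite e_sym adj_c // eq_sym yc.
- by rewrite adj_c // xc.
rewrite /= andbF; apply: negbTE.
exact: independentP c_ind (in_setC1 x xc) (in_setC1 y yc).
Qed.

Lemma complete_nedges : (forall x y, e x y = (x != y)) -> nedges e = 'C(#|V|, 2).
Proof.
move=> e_compl; rewrite /nedges -card_draws; apply: eq_card => A.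
rewrite [in RHS]inE; apply/edgesP/cards2P => -[x [y [exy ->]]].
  by exists x, y; rewrite -e_compl.
by exists x, y; rewrite e_compl.
Qed.

Lemma complete_of_nedges : nedges e = 'C(#|V|, 2) -> forall x y, e x y = (x != y).
Proof.
move=> e_full x y; have [->|xy] := eqVneq x y; first by rewrite e_irr.
case exy: (e x y) => //.
have xy_ind : independent e [set x; y].
  apply/forall_inP => u /set2P[]->; apply/forall_inP => w /set2P[]->;
    by rewrite ?e_irr ?exy // e_sym exy.
by have := nedges_indep_le e_irr xy_ind; rewrite cards2 xy e_full addn1 ltnn.
Qed.

End ExtremalGraphs.

Local Open Scope ring_scope.

Lemma det_mx22 (F : comNzRingType) (B : 'M[F]_2) :
  \det B = B 0 0 * B 1 1 - B 0 1 * B 1 0.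
Proof.
rewrite (expand_det_row _ 0) !big_ord_recl big_ord0 addr0 /cofactor !det_mx11 !mxE.
rewrite expr0 expr1 mul1r mulN1r mulrN.
by congr (B _ _ * B _ _ - B _ _ * B _ _); apply: val_inj.
Qed.

Section Rank.
Variable F : fieldType.

Lemma mxrank_mxsub m n m' n' (f : 'I_m' -> 'I_m) (g : 'I_n' -> 'I_n) (A : 'M[F]_(m, n)) :
  (\rank (mxsub f g A) <= \rank A)%N.
Proof.
have -> : mxsub f g A = rowsub f 1%:M *m (A *m colsub g 1%:M).
  by rewrite mulmx_colsub mulmx1 -mxsub_mul mul1mx.
exact: leq_trans (mxrankM_maxr _ _) (mxrankM_maxl _ _).
Qed.

Lemma mxrank_ge2 m n (A : 'M[F]_(m, n)) i1 i2 j1 j2 :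
  A i1 j1 * A i2 j2 != A i1 j2 * A i2 j1 -> (2 <= \rank A)%N.
Proof.
move=> minor_neq0.
pose B := mxsub (fun t : 'I_2 => if t == 0 then i1 else i2)
                (fun t : 'I_2 => if t == 0 then j1 else j2) A.
have B_unit : B \in unitmx by rewrite unitmxE det_mx22 unitfE subr_eq0 !mxE.
by rewrite -(mxrank_unit B_unit) mxrank_mxsub.
Qed.

Lemma mxrank_cross m n (A : 'M[F]_(m, n)) i0 j0 :
  (forall i j, A i j != 0 -> (i == i0) || (j == j0)) -> (\rank A <= 2)%N.
Proof.
move=> A_cross.
pose u : 'cV[F]_m := \col_i (i == i0)%:R.
pose v : 'cV[F]_m := \col_i (if i == i0 then 0 else A i j0).
pose w : 'rV[F]_n := \row_j (j == j0)%:R.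
have -> : A = u *m row i0 A + v *m w.
  apply/matrixP => i j; rewrite !mxE !big_ord1 !mxE.
  have [->|ii0] := eqVneq i i0; first by rewrite mul1r mul0r addr0.
  have [->|jj0] := eqVneq j j0; first by rewrite mul0r add0r mulr1.
  rewrite mul0r add0r mulr0; apply/eqP; apply: contraT => /A_cross.
  by rewrite (negbTE ii0) (negbTE jj0).
apply: leq_trans (mxrank_add _ _) _.
by rewrite -[2%N]/(1 + 1)%N leq_add // (leq_trans (mxrankM_maxl _ _)) ?rank_leq_col.
Qed.

Lemma mxrank_skew_odd n (A : 'M[F]_n) :
  2 != 0 :> F -> A^T = - A -> odd n -> (\rank A < n)%N.
Proof.
move=> two_neq0 A_skew n_odd; rewrite ltn_neqAle rank_leq_row andbT.
apply/eqP => A_full.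
have : A \in unitmx by rewrite -row_free_unit /row_free A_full.
rewrite unitmxE unitfE => /negP; apply.
have det_opp : \det A = - \det A.
  by rewrite -{1}det_tr A_skew -scaleN1r detZ -signr_odd n_odd expr1 mulN1r.
suff : 2 * \det A == 0 by rewrite mulf_eq0 (negbTE two_neq0).
by rewrite mulr_natl mulr2n {1}det_opp addNr.
Qed.

End Rank.

Section SkewAdjacency.
Variables (F : fieldType) (V : finType) (e o : rel V).
Hypothesis o_ori : orientation_of e o.

Local Notation A := (skew_adj F o).

Lemma skew_adj_tr : A^T = - A.
Proof.
apply/matrixP => i j; rewrite !mxE.
have := (o_ori (enum_val i) (enum_val j)).2.
by case: (o (enum_val i) _); case: (o (enum_val j) _); rewrite ?opprK ?oppr0.
Qed.

Lemma skew_adj_neq0 i j : A i j != 0 -> e (enum_val i) (enum_val j).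
Proof.
rewrite mxE (o_ori _ _).1.
by case: (o (enum_val i) _); case: (o (enum_val j) _); rewrite ?eqxx.
Qed.

Lemma skew_rank_ge2 x y : e x y -> (2 <= skew_rank F o)%N.
Proof.
have o_irr z : o z z = false by have := (o_ori z z).2; case: (o z z).
move=> exy; pose ix := enum_rank x; pose iy := enum_rank y.
apply: (mxrank_ge2 (i1 := ix) (i2 := iy) (j1 := ix) (j2 := iy)).
rewrite !mxE !enum_rankK !o_irr mul0r eq_sym.
have := o_ori x y; rewrite exy => -[/esym].
by case: (o x y); case: (o y x); rewrite // ?mulN1r ?mulrN1 oppr_eq0 oner_eq0.
Qed.

Lemma skew_rank_center c :
  (forall x y, e x y -> (x == c) || (y == c)) -> (skew_rank F o <= 2)%N.
Proof.
move=> e_center; apply: (mxrank_cross (i0 := enum_rank c) (j0 := enum_rank c)) => i j.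
by move/skew_adj_neq0/e_center; rewrite -!(can_eq enum_valK) enum_rankK.
Qed.

Lemma skew_rank_odd : 2 != 0 :> F -> odd #|V| -> (skew_rank F o < #|V|)%N.
Proof. by move=> two_neq0; apply: mxrank_skew_odd two_neq0 skew_adj_tr. Qed.

End SkewAdjacency.

Lemma gap_decomposition (R : numFieldType) (n m a k s : R) :
  s ^+ 2 = n * (n - 1) - 2 * m + 1 / 4 ->
  k - a - (4 * n - 2 * m - 3 * s - 7 / 2) =
    (k - 2) + (s - (a - 1 / 2)) + (n - 3 / 2 - s) * (n + s - 7 / 2).
Proof.
move=> s_sq; have -> : 2 * m = n * (n - 1) + 1 / 4 - s ^+ 2 by rewrite s_sq; ring.
by field.
Qed.

Lemma gap_product_ge0 (R : realFieldType) (N : nat) (s : R) :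
  (2 <= N)%N -> 1 / 2 <= s -> s <= N%:R - 3 / 2 ->
  0 <= (N%:R - 3 / 2 - s) * (N%:R + s - 7 / 2).
Proof.
case: N => [|[|[|N]]] // _ s_ge s_le.
  by rewrite (_ : _ - 3 / 2 - s = 0) ?mul0r //; lra.
have N_ge3 : 3 <= N.+3%:R :> R by rewrite (ler_nat R 3).
by apply: mulr_ge0; lra.
Qed.

Lemma bin2_double x : ('C(x, 2) * 2 = x * x.-1)%N.
Proof. by rewrite -[x.-1]bin1 mul_bin_diag mulnC. Qed.

Lemma natr_mul_pred (R : pzRingType) (x : nat) : x%:R * (x%:R - 1) = (x * x.-1)%:R :> R.
Proof. by case: x => [|x]; rewrite ?mul0r //= natrM -natr1 addrK. Qed.

Section SkewRankAlpha.
Variables (R : rcfType) (V : finType) (e o : rel V).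
Hypotheses (e_irr : irreflexive e) (e_sym : symmetric e).
Hypotheses (e_conn : connected_graph e) (o_ori : orientation_of e o).

Local Notation n := (#|V|%:R : R).
Local Notation m := ((nedges e)%:R : R).
Local Notation a := ((alpha e)%:R : R).
Local Notation k := ((skew_rank R o)%:R : R).
Local Notation s := (Num.sqrt (n * (n - 1) - 2 * m + 1 / 4)).
Local Notation gap_product := ((n - 3 / 2 - s) * (n + s - 7 / 2)).
Local Notation rhs := (4 * n - 2 * m - 3 * s - 7 / 2).

Lemma alpha_nedges_bound : a * (a - 1) + 2 * m <= n * (n - 1).
Proof.
have [S S_ind S_card] := alpha_witness e.
have := nedges_indep_le e_irr S_ind; rewrite S_card => le_C.
have : (alpha e * (alpha e).-1 + 2 * nedges e <= #|V| * #|V|.-1)%N.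
  by rewrite -!bin2_double [(2 * _)%N]mulnC -mulnDl addnC leq_mul2r le_C orbT.
by rewrite -(ler_nat R) natrD -!natr_mul_pred natrM.
Qed.

Lemma sqr_radical : s ^+ 2 = n * (n - 1) - 2 * m + 1 / 4.
Proof.
apply: sqr_sqrtr; have := alpha_nedges_bound; have := sqr_ge0 (a - 1 / 2).
by rewrite expr2; nra.
Qed.

Lemma alpha_half_le_radical : a - 1 / 2 <= s.
Proof.
have := sqrtr_ge0 (n * (n - 1) - 2 * m + 1 / 4).
by have := sqr_radical; have := alpha_nedges_bound; nra.
Qed.

Lemma alpha_ge1 : (0 < #|V|)%N -> 1 <= a.
Proof.
by case/card_gt0P => x _; rewrite (ler_nat R 1) -(cards1 x) alpha_max ?independent1.
Qed.

Lemma radical_le (V_ge2 : (2 <= #|V|)%N) : s <= n - 3 / 2.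
Proof.
have [r _] := card_gt0P (ltnW V_ge2).
have m_ge : n - 1 <= m.
  rewrite -[#|V|](prednK (ltnW V_ge2)) -natr1 addrK ler_nat.
  exact: card_pred_le_nedges (e_conn r).
have n_ge2 : 2 <= n by rewrite (ler_nat R 2).
have := sqrtr_ge0 (n * (n - 1) - 2 * m + 1 / 4); have := sqr_radical; nra.
Qed.

Lemma skew_rank_ge2_card (V_ge2 : (2 <= #|V|)%N) : 2 <= k.
Proof.
have [x _] := card_gt0P (ltnW V_ge2).
have [y] : exists y, y \in [set~ x] by apply/card_gt0P; rewrite cardsC1; lia.
rewrite !inE eq_sym => xy; have [z exz] := neighbor_ex xy (e_conn x y).
by rewrite (ler_nat R 2) (skew_rank_ge2 R o_ori exz).
Qed.

Lemma gap_terms_ge0 (V_ge2 : (2 <= #|V|)%N) :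
  [/\ 0 <= k - 2, 0 <= s - (a - 1 / 2) & 0 <= gap_product].
Proof.
have k_ge2 := skew_rank_ge2_card V_ge2; have a_ge1 := alpha_ge1 (ltnW V_ge2).
have s_ge := alpha_half_le_radical; have s_le := radical_le V_ge2.
split; [lra | lra | apply: gap_product_ge0 => //; lra].
Qed.

Lemma lower_bound (V_ge2 : (2 <= #|V|)%N) : rhs <= k - a.
Proof.
have [k_ge a_ge p_ge] := gap_terms_ge0 V_ge2.
rewrite -subr_ge0 (gap_decomposition a k sqr_radical).
by apply: addr_ge0 p_ge; apply: addr_ge0.
Qed.

Lemma equality_iff_gap_terms0 (V_ge2 : (2 <= #|V|)%N) :
  k - a = rhs <-> [/\ k = 2, s = a - 1 / 2 & gap_product = 0].
Proof.
have [k_ge a_ge p_ge] := gap_terms_ge0 V_ge2.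
rewrite (rwP eqP) -subr_eq0 (gap_decomposition a k sqr_radical).
rewrite (paddr_eq0 (addr_ge0 k_ge a_ge) p_ge) (paddr_eq0 k_ge a_ge) !subr_eq0.
by split=> [/andP[/andP[/eqP -> /eqP ->] /eqP ->]|[-> -> ->]]; rewrite ?eqxx.
Qed.

Lemma gap_terms0_star_or_triangle (V_ge2 : (2 <= #|V|)%N) :
  s = a - 1 / 2 -> gap_product = 0 ->
  (exists c, e =2 star_at c) \/ (#|V| = 3%N /\ forall x y, e x y = (x != y)).
Proof.
have a_ge1 := alpha_ge1 (ltnW V_ge2); have s_le := radical_le V_ge2.
move=> s_eq /eqP; rewrite mulf_eq0 => /orP[/eqP p1|/eqP p2].
  left; have [S S_ind S_card] := alpha_witness e.
  have alpha_eq : (alpha e).+1 = #|V|.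
    by apply/eqP; rewrite -(eqr_nat R) -natr1; apply/eqP; lra.
  have /cards1P[c Sc] : #|~: S| == 1%N by have := cardsC S; rewrite S_card -alpha_eq; lia.
  exists c; apply: star_of_indep_setC1 => //.
  by rewrite -Sc setCK.
(* n + s = 7/2 together with 1/2 <= s <= n - 3/2 pins the integer n between 5/2 and 3 *)
right; have V3 : #|V| = 3%N.
  by apply/eqP; rewrite eqn_leq -(ler_nat R) -(ltr_nat R 2); apply/andP; split; lra.
have n3 : n = 3 by rewrite V3.
split=> //; apply: complete_of_nedges => //.
have m3 : m = 3 by have := sqr_radical; rewrite (_ : s = 1 / 2); [nra | lra].
by apply/eqP; rewrite V3 -(eqr_nat R) m3.
Qed.

Lemma star_gap_terms0 (V_ge2 : (2 <= #|V|)%N) c : e =2 star_at c ->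
  [/\ k = 2, s = a - 1 / 2 & gap_product = 0].
Proof.
move=> e_c.
have k_le2 : k <= 2.
  rewrite (ler_nat R _ 2) (skew_rank_center R o_ori (c := c)) // => x y.
  by rewrite e_c => /andP[].
have a_ge : n - 1 <= a.
  rewrite -[#|V|](prednK (ltnW V_ge2)) -natr1 addrK ler_nat -(cardsC1 c).
  exact/alpha_max/indep_setC1_star.
have k_ge := skew_rank_ge2_card V_ge2.
have s_ge := alpha_half_le_radical; have s_le := radical_le V_ge2.
have s_eq : s = n - 3 / 2 by lra.
by split; [lra | lra | rewrite s_eq subrr mul0r].
Qed.

Lemma triangle_gap_terms0 : #|V| = 3%N -> (forall x y, e x y = (x != y)) ->
  [/\ k = 2, s = a - 1 / 2 & gap_product = 0].
Proof.
move=> V3 e_compl.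
have k_le2 : k <= 2.
  rewrite (ler_nat R _ 2) -ltnS -V3 (skew_rank_odd o_ori) ?V3 //.
  by rewrite pnatr_eq0.
have V_ge2 : (2 <= #|V|)%N by rewrite V3.
have k_ge := skew_rank_ge2_card V_ge2.
have n3 : n = 3 by rewrite V3.
have m3 : m = 3 by rewrite complete_nedges // V3.
have s_half : s = 1 / 2.
  have := sqrtr_ge0 (n * (n - 1) - 2 * m + 1 / 4).
  by have := sqr_radical; rewrite n3 m3; nra.
have a_ge1 := alpha_ge1 (ltnW V_ge2); have s_ge := alpha_half_le_radical.
by split; [lra | lra | rewrite s_half n3; lra].
Qed.

Lemma equality_iff_star_or_C3 (V_ge2 : (2 <= #|V|)%N) :
  k - a = rhs <-> graph_iso e (@star_rel #|V|) \/ graph_iso e C3_rel.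
Proof.
rewrite equality_iff_gap_terms0 // graph_iso_starP ?graph_iso_C3P ?(ltnW V_ge2) //.
split=> [[_ s_eq p0]|[[c e_c]|[V3 e_compl]]].
- exact: gap_terms0_star_or_triangle.
- exact: star_gap_terms0 e_c.
- exact: triangle_gap_terms0.
Qed.

Lemma single_vertex_case (V1 : #|V| = 1%N) :
  k - a = rhs /\ graph_iso e (@star_rel #|V|).
Proof.
have k0 : k = 0.
  by apply/eqP; rewrite pnatr_eq0 -leqn0 -ltnS -V1 (skew_rank_odd o_ori) ?V1 ?pnatr_eq0.
have n1 : n = 1 by rewrite V1.
have a_le1 : a <= 1.
  by have [S _ <-] := alpha_witness e; rewrite (ler_nat R _ 1) -V1 max_card.
have a_ge1 := alpha_ge1 (eq_leq (esym V1)); have s_ge := alpha_half_le_radical.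
split.
  have m_ge0 : 0 <= m by rewrite ler0n.
  have := alpha_nedges_bound; have := sqr_radical; move: s_ge.
  by set t := Num.sqrt _; rewrite k0 n1; nra.
have [c _] := card_gt0P (eq_leq (esym V1)).
have all_c : forall x : V, x = c by apply/fintype_le1P; rewrite V1.
apply/graph_iso_starP; first by rewrite V1.
by exists c => x y; rewrite (all_c x) (all_c y) e_irr /star_at /= eqxx.
Qed.

End SkewRankAlpha.

Theorem theorem1p5 (R : rcfType) (V : finType) (e o : rel V) :
  (0 < #|V|)%N -> simple_graph e -> connected_graph e -> orientation_of e o ->
  let n : R := (#|V|)%:R in
  let m : R := (nedges e)%:R in
  let lhs : R := (skew_rank R o)%:R - (alpha e)%:R in
  let rhs : R := 4 * n - 2 * m - 3 * Num.sqrt (n * (n - 1) - 2 * m + 1 / 4) - 7 / 2 in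
  rhs <= lhs /\ (lhs = rhs <-> (graph_iso e (@star_rel #|V|) \/ graph_iso e C3_rel)).
Proof.
move=> V_gt0 [e_irr e_sym] e_conn o_ori /=.
have [V_le1|V_ge2] := leqP #|V| 1.
  have V1 : #|V| = 1%N by apply/eqP; rewrite eqn_leq V_le1.
  have [lhs_eq iso] := single_vertex_case R e_irr o_ori V1.
  by rewrite lhs_eq; split=> //; split=> // _; left.
split; first exact: lower_bound.
exact: equality_iff_star_or_C3.
Qed.
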